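(* Let $\Delta$ be a tree with vertices $x_1,\ldots,x_n$, let $k$ be a field, and let $I=\mathcal{F}(\Delta)$ be its facet ideal in $R=k[x_1,\ldots,x_n]$. Then for any prime ideal $p$ of $R$, the facet complex $\Delta_{\mathcal{F}}(I_p)$ is a forest.
   Context: A simplicial complex on a vertex set $V$ is a collection of subsets of $V$ containing all singletons and closed under subsets; its facets are its maximal faces. Vertices are identified with variables. The facet ideal $\mathcal{F}(\Delta)$ is generated by the monomials $\prod_{x_j\in F}x_j$, $F$ a facet. If $I=(M_1,\ldots,M_q)$ with square-free monomials $M_i$, then $I_p$ is generated by the monomials $M_i'$ obtained from $M_i$ by deleting all variables not in $p$ (which are units in $R_p$); the facet complex $\Delta_{\mathcal{F}}(I_p)$ is the simplicial complex whose facets are the supports $\{x_j : x_j\mid M_i'\}$ of the minimal ones among the monomials $M_1',\ldots,M_q'$. A subcomplex of $\Delta$ is a simplicial complex whose facet set is a subset of the facet set of $\Delta$. $\Delta$ is connected if any two facets are joined by a chain of facets with consecutive members intersecting. A facet $F$ is a leaf of $\Delta$ if either $F$ is the only facet, or there is a facet $G\neq F$ with $F\cap F'\subseteq F\cap G$ for every facet $F'\neq F$. A connected $\Delta$ is a tree if every nonempty subcomplex has a leaf. A simplicial complex is a forest if every nonempty subcomplex has a leaf (equivalently, every connected component is a tree). *)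

From HB Require Import structures.
From mathcomp Require Import all_boot all_algebra.
From mathcomp Require Import ring_quotient.
From mathcomp Require Import mpoly.

Set Implicit Arguments.
Unset Strict Implicit.
Unset Printing Implicit Defensive.

(* A simplicial complex on the vertex set {x_1,...,x_n} (vertex x_{j+1} is
   identified with j : 'I_n, i.e. with the variable 'X_j of {mpoly k[n]}) is
   represented by its set of facets D : {set {set 'I_n}}. *)

Section Complexes.
Variable n : nat.
Notation face := {set 'I_n}.

Definition is_facet_set (D : {set face}) : Prop :=
  (forall F G, F \in D -> G \in D -> F \subset G -> F = G) /\
  (forall v : 'I_n, exists2 F, F \in D & v \in F).

Definition is_leaf (D : {set face}) (F : face) : Prop :=
  F \in D /\
  (D = [set F] \/
   exists2 G, G \in D /\ G != F &
     forall F', F' \in D -> F' != F -> F :&: F' \subset F :&: G).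

Definition facet_adj (D : {set face}) : rel face :=
  fun A B => [&& A \in D, B \in D & A :&: B != set0].

Definition connected_cx (D : {set face}) : Prop :=
  forall F G, F \in D -> G \in D -> connect (facet_adj D) F G.

Definition forest (D : {set face}) : Prop :=
  forall D' : {set face}, D' \subset D -> D' != set0 -> exists F, is_leaf D' F.

Definition tree (D : {set face}) : Prop := connected_cx D /\ forest D.

(* Facet complex of I_p, where S is the set of variables lying in p:
   the monomials M_F' have supports F :&: S; the facets are the minimal
   (under divisibility, i.e. inclusion of supports) ones among them. *)
Definition loc_supports (D : {set face}) (S : face) : {set face} :=
  [set F :&: S | F in D].

Definition loc_facets (D : {set face}) (S : face) : {set face} :=
  [set G in loc_supports D S |
     [forall H in loc_supports D S, ~~ (H \proper G)]].

End Complexes.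

Definition vars_in (k : fieldType) (n : nat) (p : {pred {mpoly k[n]}})
  : {set 'I_n} := [set j : 'I_n | 'X_j \in p].

From HB Require Import structures.
From mathcomp Require Import all_boot all_algebra.
From mathcomp Require Import ring_quotient.
From mathcomp Require Import mpoly.

Set Implicit Arguments.
Unset Strict Implicit.
Unset Printing Implicit Defensive.

(* Localizing at p keeps exactly the variables lying in p, so each facet F of
   Delta becomes F :&: S, S the set of those variables.  Intersecting with S
   sends a leaf of a family of facets to a leaf of the image family as long as
   no two facets of the family collapse; and every subcomplex of the
   localization is such an image of a subcomplex of Delta, obtained by choosing
   one preimage per face.  Hence leaves transfer from Delta. *)

Lemma imset_injective_section (T U : finType) (f : T -> U)
    (A : {set T}) (B : {set U}) :
  B \subset f @: A ->
  exists2 A' : {set T}, A' \subset A & {in A' &, injective f} /\ f @: A' = B.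
Proof.
move=> sBfA.
pose rep y := [pick z in A | f z == y].
exists [set x in A | (f x \in B) && (rep (f x) == Some x)].
  by apply/subsetP => x; rewrite inE => /andP[].
split.
  move=> x y; rewrite !inE => /and3P[_ _ /eqP rx] /and3P[_ _ /eqP ry] fxy.
  by move: rx; rewrite fxy ry => -[].
apply/setP => y; apply/imsetP/idP => [[x] | By].
  by rewrite inE => /and3P[_ Bfx _] ->.
have /imsetP[a Aa ya] := subsetP sBfA y By.
rewrite {}ya in By *.
move: (erefl (rep (f a))); rewrite {2}/rep.
case: pickP => [z /andP[Az /eqP fza] rep_fa | /(_ a)]; last by rewrite Aa eqxx.
by exists z; rewrite // !inE Az fza By rep_fa eqxx.
Qed.

Section LocalizationOfForests.

Variable n : nat.
Implicit Types (D E : {set {set 'I_n}}) (F S : {set 'I_n}).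

Lemma forest_subset D E : E \subset D -> forest D -> forest E.
Proof. by move=> sED fD E' sE'E; apply: fD; apply: subset_trans sED. Qed.

Lemma is_leaf_setI D S F :
  {in D &, injective (fun G => G :&: S)} -> is_leaf D F ->
  is_leaf [set G :&: S | G in D] (F :&: S).
Proof.
move=> injS [DF [-> | [G [DG nGF] leafF]]].
  by split; [rewrite imset_set1 set11 | left; rewrite imset_set1].
split; first exact: imset_f.
right; exists (G :&: S).
  split; first exact: imset_f.
  by apply: contra nGF => /eqP /injS ->.
move=> _ /imsetP[F' DF' ->] nF'F.
have nF'F0 : F' != F by apply: contraNneq nF'F => ->.
by rewrite -!setIIl; apply: setSI; exact: leafF DF' nF'F0.
Qed.

Lemma forest_loc_supports D S : forest D -> forest (loc_supports D S).
Proof.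
move=> fD E sE nE.
have [D' sD'D [injS imD']] := imset_injective_section sE.
have nD' : D' != set0 by apply: contraNneq nE => D'0; rewrite -imD' D'0 imset0.
have [F leafF] := fD D' sD'D nD'.
by exists (F :&: S); rewrite -imD'; apply: is_leaf_setI.
Qed.

Lemma loc_facets_sub D S : loc_facets D S \subset loc_supports D S.
Proof. by apply/subsetP => G; rewrite inE => /andP[]. Qed.

End LocalizationOfForests.

Theorem mainTheorem5 (k : fieldType) (n : nat) (D : {set {set 'I_n}})
  (p : {pred {mpoly k[n]}}) :
  is_facet_set D -> tree D ->
  idealr_closed p -> prime_idealr_closed p ->
  forest (loc_facets D (vars_in p)).
Proof.
move=> _ [_ forestD] _ _.
exact: forest_subset (loc_facets_sub D _) (forest_loc_supports forestD).
Qed.
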